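(* Let $d\ge1$, $\alpha\in\mathbb{N}$, let $H=(V,E)$ be a $d$-hypergraph with no isolated vertex and let $w\colon E\to\mathbb{Z}$ satisfy $w(e)\ne0$ for all $e\in E$. Define $g(0)=1$ and $g(i)=\big(i^{i}\cdot 2\alpha\cdot 2^{2^d}\big)^{2^i-1}$ for $i>0$. Suppose there is a set $c$ with $c\subseteq e$ for some $e\in E$ such that (i) $|\mathrm{link}(c)|\ge g(d-|c|)$, and (ii) for every set $f$ with $c\subsetneq f\subseteq V$ and $|f|\le d$ we have $|\mathrm{link}(f)|<g(d-|f|)$. Then there is a set $X\subseteq V$ with $|w[X]|\ge\alpha$.
   Context: A $d$-hypergraph $H=(V,E)$ has a vertex set $V$ and a set $E$ of edges, each $e\subseteq V$ with $|e|\le d$ (the empty set may be an edge). A vertex is isolated if it lies in no edge. For $c\subseteq V$, $\mathrm{link}(c)=\{e\in E: c\subsetneq e\}$. For $X\subseteq V$, $E[X]=\{e\in E: e\subseteq X\}$ and $w[X]=\sum_{e\in E[X]}w(e)$. *)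

From mathcomp Require Import all_boot all_order all_algebra.
Set Implicit Arguments. Unset Strict Implicit. Unset Printing Implicit Defensive.
Import Order.TTheory GRing.Theory Num.Theory.

Definition is_hypergraph (V : finType) (d : nat) (E : {set {set V}}) : Prop :=
  forall e, e \in E -> #|e| <= d.

Definition no_isolated (V : finType) (E : {set {set V}}) : Prop :=
  forall v : V, exists2 e, e \in E & v \in e.

Definition link (V : finType) (E : {set {set V}}) (c : {set V}) : {set {set V}} :=
  [set e in E | c \proper e].

Definition wsum (V : finType) (E : {set {set V}}) (w : {set V} -> int) (X : {set V}) : int :=
  (\sum_(e in E | e \subset X) w e)%R.

Definition gfun (alpha d i : nat) : nat :=
  if i == 0 then 1 else (i ^ i * (2 * alpha) * 2 ^ (2 ^ d)) ^ (2 ^ i - 1).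

(* Suppose |w[X]| < alpha for every X.  Peeling off the vertices of c one at a
   time (inclusion-exclusion) bounds the weight of the edges containing c that
   lie inside any Y by 2^|c| alpha.  By the maximality of c, every vertex outside
   c lies in few edges of link(c), so link(c) contains a large family I of
   inclusion-minimal edges such that no edge of link(c) meets the parts outside
   c of two different members.  For J a subfamily of I, the edges containing c inside the union
   of c and J are those inside c and the members of J, so every partial sum of w
   over I is below 2^(|c|+1) alpha; splitting I by the sign of w bounds |I|, and
   the growth of g turns this into |link(c)| < g(d - |c|). *)

From mathcomp Require Import all_boot all_order all_algebra.
From mathcomp Require Import zify ring.
Import Order.TTheory GRing.Theory Num.Theory.
Set Implicit Arguments. Unset Strict Implicit.

Lemma leq_card_bigcup (T I : finType) (J : {set I}) (F : I -> {set T}) :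
  #|\bigcup_(j in J) F j| <= \sum_(j in J) #|F j|.
Proof.
apply: (big_ind2 (fun (A : {set T}) n => #|A| <= n)) => //; first by rewrite cards0.
by move=> A m B n leAm leBn; rewrite (leq_trans (leq_card_setU A B)) ?leq_add.
Qed.

Lemma leq_card_bigcup_const (T I : finType) (J : {set I}) (F : I -> {set T}) K :
  {in J, forall j, #|F j| <= K} -> #|\bigcup_(j in J) F j| <= #|J| * K.
Proof.
by move=> leFK; rewrite (leq_trans (leq_card_bigcup J F)) // -sum_nat_const leq_sum.
Qed.

Definition rel_independent (T : finType) (r : rel T) (I : {set T}) :=
  {in I &, forall x y, x != y -> ~~ r x y}.

Lemma exists_independent_subset (T : finType) (r : rel T) (K : nat) (S : {set T}) :
  symmetric r -> {in S, forall x, r x x} ->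
  {in S, forall x, #|[set y in S | r x y]| <= K} ->
  exists I : {set T}, [/\ I \subset S, rel_independent r I & #|S| <= #|I| * K].
Proof.
move=> rC; have [n] := ubnP #|S|; elim: n S => // n IH S ltSn rxx degS.
have [->|[x Sx]] := set_0Vmem S.
  by exists set0; rewrite sub0set cards0; split=> // y; rewrite inE.
set N := [set y in S | r x y]; set S' := S :\: N.
have sS'S : S' \subset S by apply: subsetDl.
have ltS'n : #|S'| < n.
  rewrite -ltnS; apply: leq_ltn_trans _ ltSn; apply: proper_card; apply/properP; split=> //.
  by exists x; rewrite // !inE Sx rxx.
have degS' y : y \in S' -> #|[set z in S' | r y z]| <= K.
  move=> S'y; apply: leq_trans (degS y (subsetP sS'S y S'y)).
  by apply/subset_leq_card/subsetP => z; rewrite !inE => /andP[/andP[_ ->] ->].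
have [I [sIS' indI leS'I]] := IH S' ltS'n (sub_in1 (subsetP sS'S) rxx) degS'.
have notrx y : y \in I -> ~~ r x y.
  by move=> /(subsetP sIS'); rewrite !inE negb_and => /andP[/orP[/negbTE->//|]].
have Ix : x \notin I by apply: contraT => /negPn /notrx; rewrite rxx.
exists (x |: I); split.
- by rewrite subUset sub1set Sx (subset_trans sIS').
- move=> y z; rewrite !inE => /predU1P[->|Iy] /predU1P[->|Iz]; rewrite ?eqxx //.
  + by move=> _; apply: notrx.
  + by move=> _; rewrite rC; apply: notrx.
  + exact: indI.
- have sNS : N \subset S by apply/subsetP => y; rewrite inE => /andP[].
  by rewrite cardsU1 Ix mulSn -(cardsID N S) (setIidPr sNS) leq_add ?degS.
Qed.

Section StarWeights.
Variables (V : finType) (E : {set {set V}}) (w : {set V} -> int).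

Definition star (C : {set V}) : {set {set V}} := [set e in E | C \subset e].

Lemma star0 : star set0 = E.
Proof. by apply/setP => e; rewrite inE sub0set andbT. Qed.

Lemma wsum_starU1 x C Y :
  wsum (star (x |: C)) w Y = (wsum (star C) w Y - wsum (star C) w (Y :\ x))%R.
Proof.
apply/eqP; rewrite eq_sym subr_eq /wsum (bigID (fun e : {set V} => x \in e)) /=.
apply/eqP; congr (_ + _)%R; apply: eq_bigl => e; rewrite !inE.
  by rewrite subUset sub1set; case: (x \in e); rewrite /= ?andbT ?andbF.
by rewrite subsetD1; case: (x \in e); rewrite /= ?andbT ?andbF.
Qed.

Lemma wsum_star_bound (a : int) :
  (forall X, `|wsum E w X| < a)%R ->
  forall C Y, (`|wsum (star C) w Y| < a *+ 2 ^ #|C|)%R.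
Proof.
move=> ltEa C; have [n] := ubnP #|C|; elim: n C => // n IH C ltCn Y.
have [->|[x Cx]] := set_0Vmem C; first by rewrite star0 cards0 expn0.
have ltC'n : #|C :\ x| < n by rewrite -ltnS (leq_trans _ ltCn) // (cardsD1 x C) Cx.
rewrite -(setD1K Cx) wsum_starU1 cardsU1 setD11 add1n expnS mulnC mulrnA mulr2n.
by rewrite (le_lt_trans (ler_normB _ _)) // ltrD ?IH.
Qed.

End StarWeights.

Section LinkPacking.
Variables (V : finType) (E : {set {set V}}) (c : {set V}).

Local Notation P := (link E c).

Lemma link_setD_neq0 (p : {set V}) : p \in P -> p :\: c != set0.
Proof. by rewrite inE setD_eq0 properE => /and3P[]. Qed.

Lemma link_sup (p : {set V}) : p \in P -> c \subset p.
Proof. by rewrite inE => /andP[_ /proper_sub]. Qed.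

Definition conflict (p q : {set V}) : bool :=
  [exists r in P, (r :&: (p :\: c) != set0) && (r :&: (q :\: c) != set0)].

Lemma conflictC : symmetric conflict.
Proof.
by move=> p q; apply/existsP/existsP => -[r /and3P[Pr rp rq]]; exists r; rewrite Pr rp rq.
Qed.

Lemma conflictxx (p : {set V}) : p \in P -> conflict p p.
Proof.
move=> Pp; apply/existsP; exists p.
by rewrite Pp (setIidPr (subsetDl p c)) link_setD_neq0.
Qed.

Lemma conflictSS (p q p' q' : {set V}) :
  p' \subset p -> q' \subset q -> conflict p' q' -> conflict p q.
Proof.
move=> sp sq /existsP[r /and3P[Pr rp rq]]; apply/existsP; exists r.
by rewrite Pr (subset_neq0 (setIS r (setSD c sp)) rp)
           (subset_neq0 (setIS r (setSD c sq)) rq).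
Qed.

Lemma card_link_vertex (v : V) :
  v \notin c -> #|[set r in P | v \in r]| <= #|link E (v |: c)|.+1.
Proof.
move=> cv; apply: (@leq_trans #|(v |: c) |: link E (v |: c)|); last first.
  by rewrite cardsU1 -add1n leq_add2r leq_b1.
apply/subset_leq_card/subsetP => r; rewrite !inE => /andP[Pr rv].
case: eqP => //= /eqP ne; case/andP: Pr => -> /proper_sub cr.
by rewrite properEneq eq_sym ne subUset sub1set rv.
Qed.

Lemma card_conflict_le (i D : nat) :
  {in P, forall p, #|p :\: c| <= i} ->
  (forall v, v \notin c -> #|[set r in P | v \in r]| <= D) ->
  {in P, forall p, #|[set q in P | conflict p q]| <= i * D * (i * D)}.
Proof.
move=> sizeP degP p Pp.
pose nbhd (v : V) := [set r in P | v \in r].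
apply: (@leq_trans #|\bigcup_(v in p :\: c) \bigcup_(r in nbhd v)
                     \bigcup_(u in r :\: c) nbhd u|).
  apply/subset_leq_card/subsetP => q; rewrite inE => /andP[Pq /existsP[r]].
  case/and3P=> Pr /set0Pn[v /setIP[rv pv]] /set0Pn[u /setIP[ru qu]].
  apply/bigcupP; exists v => //; apply/bigcupP; exists r; first by rewrite inE Pr rv.
  apply/bigcupP; exists u; first by rewrite inE (setDP qu).2 ru.
  by rewrite inE Pq (setDP qu).1.
rewrite -mulnA.
apply: leq_trans (@leq_card_bigcup_const _ _ _ _ (D * (i * D)) _) _; last first.
  by rewrite leq_mul2r sizeP ?orbT.
move=> v /setDP[_ cv].
apply: leq_trans (@leq_card_bigcup_const _ _ _ _ (i * D) _) _; last first.
  by rewrite leq_mul2r degP ?orbT.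
move=> r; rewrite inE => /andP[Pr _].
apply: leq_trans (@leq_card_bigcup_const _ _ _ _ D _) _; last first.
  by rewrite leq_mul2r sizeP ?orbT.
by move=> u /setDP[_ cu]; apply: degP.
Qed.

Definition minimal_packing (I : {set {set V}}) :=
  [/\ I \subset P, {in I, forall p r : {set V}, r \in P -> r \subset p -> r = p}
    & rel_independent conflict I].

Lemma exists_minimal_packing K :
  {in P, forall p, #|[set q in P | conflict p q]| <= K} ->
  exists2 I, minimal_packing I & #|P| <= #|I| * K.
Proof.
move=> degK.
have [I [sIP indI leP]] := exists_independent_subset conflictC conflictxx degK.
pose m (p : {set V}) := [arg min_(r < p | (r \in P) && (r \subset p)) #|r|].
have mP (p : {set V}) : p \in P ->
    [/\ m p \in P, m p \subset p & forall r, r \in P -> r \subset m p -> r = m p].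
  move=> Pp; rewrite /m; case: arg_minnP => [|r /andP[Pr rp] minr].
    by rewrite Pp subxx.
  split=> // r' Pr' r'r; apply/eqP; rewrite eqEcard r'r minr //.
  by rewrite Pr' (subset_trans r'r rp).
have mI (p : {set V}) (Ip : p \in I) := mP p (subsetP sIP p Ip).
have m_inj : {in I &, injective m}.
  move=> p q Ip Iq mpq; have [Pmp mpp _] := mI p Ip; have [_ mqq _] := mI q Iq.
  rewrite -mpq in mqq; apply/eqP; apply: contraTT (conflictSS mpp mqq (conflictxx Pmp)).
  exact: indI.
exists (m @: I); last by rewrite card_in_imset.
split.
- by apply/subsetP => _ /imsetP[p Ip ->]; case: (mI p Ip).
- by move=> _ /imsetP[p Ip ->]; case: (mI p Ip).
- move=> _ _ /imsetP[p Ip ->] /imsetP[q Iq ->] mpq.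
  have [_ mpp _] := mI p Ip; have [_ mqq _] := mI q Iq.
  apply: contra (conflictSS mpp mqq) _; apply: indI => //.
  by apply: contraNneq mpq => ->.
Qed.

Lemma minimal_packing_sub_bigcup (I J : {set {set V}}) (e : {set V}) :
  minimal_packing I -> J \subset I -> e \in P ->
  e \subset c :|: \bigcup_(p in J) p -> e \in J.
Proof.
move=> [sIP minI indI] sJI Pe seU.
have [u /setDP[eu cu]] := set0Pn _ (link_setD_neq0 Pe).
have [p Jp pu] : exists2 p, p \in J & u \in p.
  by move: (subsetP seU u eu); rewrite inE (negbTE cu) => /bigcupP.
have Ip := subsetP sJI p Jp.
suff sep : e \subset p by rewrite (minI p Ip e Pe sep).
apply/subsetP => y ey; have [cy|ncy] := boolP (y \in c).
  exact: subsetP (link_sup (subsetP sIP p Ip)) y cy.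
move: (subsetP seU y ey); rewrite inE (negbTE ncy) => /bigcupP[q Jq qy].
have [->//|neq] := eqVneq p q.
have : conflict p q.
  apply/existsP; exists e; rewrite Pe /=.
  by apply/andP; split; apply/set0Pn; [exists u | exists y]; rewrite !inE ?eu ?cu ?ey ?ncy.
by rewrite (negbTE (indI p q Ip (subsetP sJI q Jq) neq)).
Qed.

Lemma wsum_star_minimal_packing (w : {set V} -> int) (I J : {set {set V}}) :
  minimal_packing I -> J \subset I ->
  wsum (star E c) w (c :|: \bigcup_(p in J) p)
  = (wsum (star E c) w c + \sum_(p in J) w p)%R.
Proof.
move=> packI sJI; have [sIP _ _] := packI; set U := c :|: _.
have sJP : J \subset P := subset_trans sJI sIP.
have eqS : [set e in star E c | e \subset U] = [set e in star E c | e \subset c] :|: J.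
  apply/setP => e; rewrite !inE; apply/idP/idP.
    case/andP => /andP[Ee ce] eU; rewrite Ee ce /=; case ec: (e \subset c) => //=.
    by apply: minimal_packing_sub_bigcup packI sJI _ eU; rewrite inE Ee properE ce ec.
  case/orP => [/andP[-> ec] | Je]; first by rewrite (subset_trans ec) ?subsetUl.
  have Pe := subsetP sJP e Je; rewrite link_sup // andbT.
  move: Pe; rewrite inE => /andP[-> _] /=; apply: subsetU; apply/orP; right.
  exact: bigcup_sup.
have dis : [disjoint [set e in star E c | e \subset c] & J].
  rewrite -setI_eq0; apply/eqP/setP => e; rewrite !inE; apply/negP.
  move=> /andP[/andP[_ ec] /(subsetP sJP)].
  by rewrite inE properE ec /= !andbF.
rewrite /wsum (eq_bigl (mem [set e in star E c | e \subset U])) => [|e]; last first.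
  by rewrite !inE.
rewrite eqS (eq_bigl [predU [set e in star E c | e \subset c] & J]) => [|e]; last first.
  by rewrite !inE.
by rewrite bigU //; congr (_ + _)%R; apply: eq_bigl => e; rewrite inE.
Qed.

Lemma card_minimal_packing_lt (w : {set V} -> int) (a : int) (I : {set {set V}}) :
  minimal_packing I -> {in I, forall p, w p != 0%R} ->
  (forall Y, `|wsum (star E c) w Y| < a)%R -> (#|I|%:Z < a *+ 4)%R.
Proof.
move=> packI wI0 lta.
have sumJ (J : {set {set V}}) : J \subset I -> (`|\sum_(p in J) w p| < a *+ 2)%R.
  move=> sJI; rewrite -[X in `|X|%R](addKr (wsum (star E c) w c)).
  rewrite -(wsum_star_minimal_packing w packI sJI) addrC mulr2n.
  by rewrite (le_lt_trans (ler_normB _ _)) // ltrD ?lta.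
set B := [set p | (0 < w p)%R].
have cardIB : (#|I :&: B|%:Z <= `|\sum_(p in I :&: B) w p|)%R.
  apply: le_trans (ler_norm _); rewrite -natz -sumr_const; apply: ler_sum => p.
  by rewrite !inE => /andP[_ wp]; rewrite -gtz0_ge1.
have cardIDB : (#|I :\: B|%:Z <= `|\sum_(p in I :\: B) w p|)%R.
  rewrite -normrN -sumrN; apply: le_trans (ler_norm _).
  rewrite -natz -sumr_const; apply: ler_sum => p; rewrite !inE => /andP[wp Ip].
  by rewrite -gtz0_ge1 oppr_gt0 lt_neqAle wI0 //= leNgt.
rewrite -(cardsID B I) PoszD -[4]/(2 + 2)%N mulrnDr.
by rewrite ltrD ?(le_lt_trans cardIB) ?(le_lt_trans cardIDB) ?sumJ ?subsetIl ?subsetDl.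
Qed.

End LinkPacking.

Lemma gfun_gt0 alpha d i : 0 < alpha -> 0 < gfun alpha d i.
Proof.
move=> a0; rewrite /gfun; case: eqP => // /eqP i0.
by rewrite expn_gt0 !muln_gt0 !expn_gt0 lt0n i0 a0.
Qed.

Lemma leq_gfun_step alpha d i : 0 < alpha -> 0 < i ->
  2 ^ d.+1 * alpha * (i * gfun alpha d i.-1) ^ 2 <= gfun alpha d i.
Proof.
move=> a0; case: i => // k _; rewrite succnK.
set B := k.+1 ^ k.+1 * (2 * alpha) * 2 ^ 2 ^ d.
have B0 : 0 < B by rewrite !muln_gt0 !expn_gt0 a0.
have gB : gfun alpha d k.+1 = B * (B ^ (2 ^ k - 1)) ^ 2.
  rewrite /gfun /= -/B.
  have -> : 2 ^ k.+1 - 1 = ((2 ^ k - 1) * 2).+1 by rewrite expnS; have := expn_gt0 2 k; lia.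
  by rewrite expnS expnM.
have gk : gfun alpha d k <= B ^ (2 ^ k - 1).
  rewrite /gfun; case: eqP => [_|/eqP]; first by rewrite expn_gt0 B0.
  rewrite -lt0n => k0.
  have e0 : 0 < 2 ^ k - 1 by rewrite subn_gt0 (leq_trans _ (leq_pexp2l (isT : 0 < 2) k0)).
  have lekk : k ^ k <= k.+1 ^ k.+1.
    by rewrite (leq_trans _ (leq_pexp2l (ltn0Sn k) (leqnSn k))) // leq_exp2r.
  by rewrite leq_exp2r // leq_mul // leq_mul.
have le_sqr_pow : k.+1 ^ 2 <= k.+1 ^ k.+1 by case: (posnP k) => [->//|k0]; apply: leq_pexp2l.
have le_pow_d : 2 ^ d <= 2 ^ 2 ^ d by rewrite leq_exp2l // ltnW // ltn_expl.
rewrite gB expnMn mulnA leq_mul ?leq_exp2r //.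
rewrite /B expnS.
rewrite (_ : 2 * 2 ^ d * alpha * k.+1 ^ 2 = k.+1 ^ 2 * (2 * alpha) * 2 ^ d); last by ring.
by rewrite leq_mul ?leq_mul.
Qed.

Lemma card_link_lt_gfun (V : finType) (d alpha : nat) (E : {set {set V}})
    (w : {set V} -> int) (c : {set V}) :
  is_hypergraph d E -> {in E, forall e, w e != 0%R} ->
  (forall X, `|wsum E w X| < alpha%:Z)%R ->
  (forall f : {set V}, c \proper f -> #|f| <= d ->
     #|link E f| < gfun alpha d (d - #|f|)) ->
  #|link E c| < gfun alpha d (d - #|c|).
Proof.
move=> hypE w0 ltEa ltlink.
have a0 : 0 < alpha by rewrite -ltz_nat (le_lt_trans _ (ltEa set0)).
have [leDc|ltcd] := leqP d #|c|.
  rewrite (_ : link E c = set0) ?cards0 ?gfun_gt0 //; apply/setP => e.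
  by rewrite !inE; apply/negbTE/andP => -[/hypE lee /proper_card]; lia.
set i := d - #|c|; have i0 : 0 < i by rewrite subn_gt0.
set D := gfun alpha d i.-1.
have degP v : v \notin c -> #|[set r in link E c | v \in r]| <= D.
  move=> cv; apply: leq_trans (card_link_vertex E cv) _.
  have cardvc : #|v |: c| = #|c|.+1 by rewrite cardsU1 cv.
  have := ltlink (v |: c) (properUr _) _; rewrite cardvc subnS sub1set; exact.
have sizeP : {in link E c, forall p, #|p :\: c| <= i}.
  move=> p; rewrite inE => /andP[/hypE lepd /proper_sub cp].
  by rewrite cardsD (setIidPr cp); lia.
have [I packI leP] := exists_minimal_packing (card_conflict_le sizeP degP).
have ltI : #|I| < alpha * 2 ^ #|c| * 4.
  have [sIP _ _] := packI.
  have wI0 : {in I, forall p, w p != 0%R}.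
    by move=> p /(subsetP sIP); rewrite inE => /andP[/w0].
  have := card_minimal_packing_lt packI wI0 (wsum_star_bound ltEa c).
  by rewrite !pmulrn !mulrzz -!PoszM ltz_nat.
apply: leq_ltn_trans leP (leq_trans _ (leq_gfun_step d a0 i0)).
have lecd : 4 * 2 ^ #|c| <= 2 ^ d.+1 by rewrite -[4]/(2 ^ 2) -expnD leq_exp2l //; lia.
rewrite -/D -[(i * D) ^ 2]mulnn ltn_pmul2r ?muln_gt0 ?i0 ?gfun_gt0 //.
by rewrite (leq_trans ltI) // -mulnA mulnC leq_mul2r mulnC lecd orbT.
Qed.

Theorem lemma10 (V : finType) (d alpha : nat) (E : {set {set V}})
    (w : {set V} -> int) :
  1 <= d ->
  is_hypergraph d E ->
  no_isolated E ->
  (forall e, e \in E -> w e != 0%R) ->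
  (exists c : {set V},
      [/\ (exists2 e, e \in E & c \subset e),
          gfun alpha d (d - #|c|) <= #|link E c| &
          (forall f : {set V}, c \proper f -> #|f| <= d ->
             #|link E f| < gfun alpha d (d - #|f|))]) ->
  exists X : {set V}, (alpha%:Z <= `|wsum E w X|)%R.
Proof.
move=> _ hypE _ w0 [c [_ gelink ltlink]].
apply/existsP; apply: contraTT gelink => /existsPn ltEa.
rewrite -ltnNge; apply: (card_link_lt_gfun hypE w0 _ ltlink) => X.
by rewrite ltNge ltEa.
Qed.
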